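(* For every integer $r\ge1$, $\mathrm{Var}(\mu^{(r)})\le b^2\lambda(r)$.
   Context: Fix an integer $b\ge2$. For $n\in\mathbb{N}$ with base-$b$ digits $n_k$, $s(n):=\sum_kn_k$. For $r,n\in\mathbb{N}$, $\Delta^{(r)}(n):=s(n+r)-s(n)$, and $\mu^{(r)}(d):=\lim_{N\to\infty}\frac1N|\{n<N:\Delta^{(r)}(n)=d\}|$ for $d\in\mathbb{Z}$; these limits exist and $\mu^{(r)}$ is a probability measure on $\mathbb{Z}$ with finite moments; $\mathrm{Var}(\mu^{(r)})$ is its variance. Blocks: write the expansion of $r\ge1$ as the digit string $r_\ell\cdots r_0$, $r_\ell\neq0$. A block is either a maximal run of consecutive $0$ digits (a block of $0$'s), or a maximal run of consecutive digits equal to $b-1$, or (when $b\ge3$) a single digit with value in $\{1,\dots,b-2\}$. $\lambda(r)$ is the number of blocks of $r$ that are not blocks of $0$'s (non-zero blocks). *)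

From Stdlib Require Import Reals Lra Lia ZArith Arith List.
From Coquelicot Require Import Coquelicot.
Import ListNotations.
Open Scope R_scope.

Definition digit (b n k : nat) : nat := (n / b ^ k) mod b.

(* s(n) = sum_k n_k ; digits with k > n vanish since b^k > n for b >= 2 *)
Definition digsum (b n : nat) : nat :=
  fold_right Nat.add 0%nat (map (digit b n) (seq 0 (S n))).

Definition Delta (b r n : nat) : Z :=
  (Z.of_nat (digsum b (n + r)) - Z.of_nat (digsum b n))%Z.

Definition count_Delta (b r : nat) (d : Z) (N : nat) : nat :=
  length (filter (fun n => Z.eqb (Delta b r n) d) (seq 0 N)).

Definition mu (b r : nat) (d : Z) : R :=
  real (Lim_seq (fun N => INR (count_Delta b r d N) / INR N)).

(* Enumeration of Z without repetition: k |-> k and k |-> -(k+1). *)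
Definition zpos (k : nat) : Z := Z.of_nat k.
Definition zneg (k : nat) : Z := (- Z.of_nat (S k))%Z.

Definition mu_mean (b r : nat) : R :=
  Series (fun k => IZR (zpos k) * mu b r (zpos k) + IZR (zneg k) * mu b r (zneg k)).

Definition mu_var (b r : nat) : R :=
  let m := mu_mean b r in
  Series (fun k => (IZR (zpos k) - m) ^ 2 * mu b r (zpos k)
                 + (IZR (zneg k) - m) ^ 2 * mu b r (zneg k)).

(* A non-zero block is either a maximal run of digits b-1 or a
   single digit in {1,..,b-2}.  We count each non-zero block by its lowest
   position k: r_k <> 0, and not (r_k = b-1 and r_{k-1} = b-1 with k >= 1). *)
Definition block_start (b r k : nat) : bool :=
  negb (Nat.eqb (digit b r k) 0) &&
  negb (Nat.eqb (digit b r k) (b - 1) &&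
        match k with
        | O => false
        | S k' => Nat.eqb (digit b r k') (b - 1)
        end).

(* lambda(r) = number of non-zero blocks (positions > r carry zero digits). *)
Definition lambda (b r : nat) : nat :=
  length (filter (block_start b r) (seq 0 (S r))).

From Pilot Require Import Defs.
From Stdlib Require Import Reals Lra Lia ZArith Arith List.
From Coquelicot Require Import Coquelicot.
Open Scope R_scope.

(** Up to a set of density [r / b^K], the increments [Delta^(r)] are periodic with period
    [b^K]: on each period they agree with [wrap_delta], the change of the digit sum when [r]
    is added modulo [b^K].  Splitting on the lowest digit gives a recursion for the sum of
    squares of [wrap_delta] over a period, and an induction on [K] (strengthened to control
    carries into a run of digits [b - 1]) bounds it by [b^K b^2 lambda(r)].  Hence every
    truncated second moment of [mu^(r)] is at most [b^2 lambda(r)]; since [mu^(r)] has total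
    mass at most one, its variance is bounded by its second moment. *)

Lemma list_sum_map_seq_S (f : nat -> nat) (M : nat) :
  list_sum (map f (seq 0 (S M))) = (f 0%nat + list_sum (map (fun k => f (S k)) (seq 0 M)))%nat.
Proof. simpl. rewrite <- seq_shift, map_map. reflexivity. Qed.

Lemma list_sum_map_seq_vanish (f : nat -> nat) (M0 M : nat) :
  (M0 <= M)%nat -> (forall k, (M0 <= k)%nat -> f k = 0%nat) ->
  list_sum (map f (seq 0 M)) = list_sum (map f (seq 0 M0)).
Proof.
  intros HM Hf. replace M with (M0 + (M - M0))%nat by lia.
  rewrite seq_app, map_app, list_sum_app.
  enough (Hz : forall s j, (M0 <= s)%nat -> list_sum (map f (seq s j)) = 0%nat)
    by (rewrite (Hz (0 + M0)%nat); lia).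
  intros s j; revert s; induction j as [|j IH]; intros s Hs; simpl; [reflexivity|].
  rewrite Hf, IH; lia.
Qed.

Lemma length_filter_list_sum {A : Type} (f : A -> bool) (l : list A) :
  length (filter f l) = list_sum (map (fun x => if f x then 1%nat else 0%nat) l).
Proof. induction l as [|x l IH]; simpl; [reflexivity|]. destruct (f x); simpl; lia. Qed.

Fixpoint rsum (n : nat) (h : nat -> R) : R :=
  match n with O => 0 | S n' => rsum n' h + h n' end.

Lemma rsum_ext n h1 h2 : (forall i, (i < n)%nat -> h1 i = h2 i) -> rsum n h1 = rsum n h2.
Proof.
  induction n; simpl; intros H; [reflexivity|].
  rewrite IHn by (intros; apply H; lia). rewrite H by lia. reflexivity.
Qed.

Lemma rsum_le n h1 h2 : (forall i, (i < n)%nat -> h1 i <= h2 i) -> rsum n h1 <= rsum n h2.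
Proof.
  induction n; simpl; intros H; [lra|].
  assert (h1 n <= h2 n) by (apply H; lia).
  assert (rsum n h1 <= rsum n h2) by (apply IHn; intros; apply H; lia). lra.
Qed.

Lemma rsum_nonneg n h : (forall i, (i < n)%nat -> 0 <= h i) -> 0 <= rsum n h.
Proof.
  intros H. replace 0 with (rsum n (fun _ => 0)).
  - apply rsum_le, H.
  - induction n; simpl; [reflexivity|]. rewrite IHn by (intros; apply H; lia). lra.
Qed.

Lemma rsum_plus n h1 h2 : rsum n (fun i => h1 i + h2 i) = rsum n h1 + rsum n h2.
Proof. induction n; simpl; [lra|]. rewrite IHn. lra. Qed.

Lemma rsum_scal n c h : rsum n (fun i => c * h i) = c * rsum n h.
Proof. induction n; simpl; [lra|]. rewrite IHn. lra. Qed.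

Lemma rsum_const n c : rsum n (fun _ => c) = INR n * c.
Proof. induction n; simpl rsum; [simpl; lra|]. rewrite IHn, S_INR. lra. Qed.

Lemma rsum_add p q h : rsum (p + q) h = rsum p h + rsum q (fun i => h (p + i)%nat).
Proof.
  induction q; simpl; [rewrite Nat.add_0_r; lra|].
  rewrite Nat.add_succ_r. simpl. rewrite IHq. lra.
Qed.

Lemma rsum_mul n m h : rsum (n * m) h = rsum n (fun y => rsum m (fun a => h (y * m + a)%nat)).
Proof. induction n; simpl; [reflexivity|]. rewrite Nat.add_comm, rsum_add, IHn. reflexivity. Qed.

Lemma rsum_swap n m g :
  rsum n (fun i => rsum m (fun j => g i j)) = rsum m (fun j => rsum n (fun i => g i j)).
Proof. induction n; simpl; [rewrite rsum_const; lra|]. rewrite IHn, <- rsum_plus. reflexivity. Qed.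

Lemma rsum_le_length n m h : (n <= m)%nat -> (forall i, 0 <= h i) -> rsum n h <= rsum m h.
Proof.
  intros H Hh. replace m with (n + (m - n))%nat by lia. rewrite rsum_add.
  assert (0 <= rsum (m - n) (fun i => h (n + i)%nat)) by (apply rsum_nonneg; auto). lra.
Qed.

Lemma rsum_ltb n k X Y :
  rsum n (fun a => if Nat.ltb a k then X else Y) = INR (Nat.min n k) * X + INR (n - k) * Y.
Proof.
  induction n; simpl rsum; [simpl; lra|]. rewrite IHn.
  destruct (Nat.ltb_spec n k).
  - rewrite (Nat.min_l (S n)), Nat.min_l by lia.
    replace (S n - k)%nat with 0%nat by lia. replace (n - k)%nat with 0%nat by lia.
    rewrite S_INR. lra.
  - rewrite !Nat.min_r by lia. replace (S n - k)%nat with (S (n - k)) by lia. rewrite S_INR. lra.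
Qed.

(** * Digit sums and blocks *)

Section Digits.

Local Open Scope nat_scope.

Variable b : nat.
Hypothesis Hb : 2 <= b.

Lemma div_add_mul_small a v : a < b -> (a + b * v) / b = v.
Proof.
  intros Ha. rewrite Nat.mul_comm, Nat.div_add by lia. rewrite Nat.div_small; lia.
Qed.

Lemma mod_add_mul_small a v : a < b -> (a + b * v) mod b = a.
Proof. intros Ha. rewrite Nat.mul_comm, Nat.Div0.mod_add. apply Nat.mod_small, Ha. Qed.

Lemma digit_add_mul_0 a v : a < b -> digit b (a + b * v) 0 = a.
Proof.
  intros Ha. unfold digit. rewrite Nat.pow_0_r, Nat.div_1_r. apply mod_add_mul_small, Ha.
Qed.

Lemma digit_add_mul_S a v k : a < b -> digit b (a + b * v) (S k) = digit b v k.
Proof.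
  intros Ha. unfold digit. rewrite Nat.pow_succ_r', <- Nat.Div0.div_div.
  rewrite div_add_mul_small by exact Ha. reflexivity.
Qed.

Lemma digit_0_mod n : digit b n 0 = n mod b.
Proof. unfold digit. rewrite Nat.pow_0_r, Nat.div_1_r. reflexivity. Qed.

Lemma digit_large n k : n < b ^ k -> digit b n k = 0.
Proof. intros Hn. unfold digit. rewrite Nat.div_small by exact Hn. apply Nat.Div0.mod_0_l. Qed.

Lemma lt_pow_of_le n M : n <= M -> n < b ^ M.
Proof.
  intros HnM. apply Nat.lt_le_trans with (b ^ n).
  - apply Nat.pow_gt_lin_r; lia.
  - apply Nat.pow_le_mono_r; lia.
Qed.

Lemma add_mul_lt_pow a v M : a < b -> v < b ^ M -> a + b * v < b ^ S M.
Proof. intros Ha Hv. rewrite Nat.pow_succ_r'. nia. Qed.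

Lemma nat_digit_decomp u : exists a v, a < b /\ u = a + b * v.
Proof.
  exists (u mod b), (u / b). split.
  - apply Nat.mod_upper_bound; lia.
  - pose proof (Nat.div_mod u b ltac:(lia)); lia.
Qed.

Lemma digsum_eq_sum n M :
  n < b ^ M -> digsum b n = list_sum (map (digit b n) (seq 0 M)).
Proof.
  intros Hn. unfold digsum. fold (list_sum (map (digit b n) (seq 0 (S n)))).
  assert (Hvan : forall M0 M1, n < b ^ M0 -> M0 <= M1 ->
            list_sum (map (digit b n) (seq 0 M1)) = list_sum (map (digit b n) (seq 0 M0))).
  { intros M0 M1 HM0 HM1. apply list_sum_map_seq_vanish; [exact HM1|].
    intros k Hk. apply digit_large, Nat.lt_le_trans with (b ^ M0); [exact HM0|].
    apply Nat.pow_le_mono_r; lia. }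
  rewrite <- (Hvan (S n) (M + S n)), (Hvan M (M + S n)); try lia; try assumption.
  apply lt_pow_of_le; lia.
Qed.

Lemma digsum_0 : digsum b 0 = 0.
Proof.
  rewrite (digsum_eq_sum 0 0) by (rewrite Nat.pow_0_r; lia). reflexivity.
Qed.

Lemma digsum_add_mul a v : a < b -> digsum b (a + b * v) = a + digsum b v.
Proof.
  intros Ha. assert (Hv : v < b ^ v) by (apply lt_pow_of_le; lia).
  rewrite (digsum_eq_sum _ (S v)) by (apply add_mul_lt_pow; assumption).
  rewrite (digsum_eq_sum v v Hv), list_sum_map_seq_S, digit_add_mul_0 by exact Ha.
  f_equal. f_equal. apply map_ext. intros k. apply digit_add_mul_S, Ha.
Qed.

Lemma digsum_mul_pow_add K q y : y < b ^ K -> digsum b (q * b ^ K + y) = digsum b q + digsum b y.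
Proof.
  revert y. induction K as [|K IH]; intros y Hy.
  - rewrite Nat.pow_0_r in *. replace y with 0 by lia.
    rewrite digsum_0, Nat.mul_1_r, !Nat.add_0_r. reflexivity.
  - destruct (nat_digit_decomp y) as [a [v [Ha ->]]]. rewrite Nat.pow_succ_r' in *.
    replace (q * (b * b ^ K) + (a + b * v)) with (a + b * (q * b ^ K + v)) by ring.
    assert (Hv : v < b ^ K) by nia.
    rewrite !digsum_add_mul, IH by assumption. lia.
Qed.

(** A block starting at position [k]: [pf] stands for "the digit below position 0 is [b-1]". *)
Definition block_start_from (n : nat) (pf : bool) (k : nat) : bool :=
  negb (Nat.eqb (digit b n k) 0) &&
  negb (Nat.eqb (digit b n k) (b - 1) &&
        match k with
        | O => pf
        | S k' => Nat.eqb (digit b n k') (b - 1)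
        end).

Definition block_count (n : nat) (pf : bool) (M : nat) : nat :=
  list_sum (map (fun k => if block_start_from n pf k then 1 else 0) (seq 0 M)).

Lemma block_count_stable n pf M0 M :
  n < b ^ M0 -> M0 <= M -> block_count n pf M = block_count n pf M0.
Proof.
  intros Hn HM. apply list_sum_map_seq_vanish; [exact HM|].
  intros k Hk. unfold block_start_from. rewrite digit_large; [reflexivity|].
  apply Nat.lt_le_trans with (b ^ M0); [exact Hn|]. apply Nat.pow_le_mono_r; lia.
Qed.

Lemma lambda_eq_block_count n M : n < b ^ M -> lambda b n = block_count n false M.
Proof.
  intros Hn. unfold lambda. rewrite length_filter_list_sum.
  change (block_count n false (S n) = block_count n false M).
  rewrite <- (block_count_stable n false (S n) (M + S n)), (block_count_stable n false M (M + S n));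
    try lia; try assumption.
  apply lt_pow_of_le; lia.
Qed.

Lemma block_count_add_mul a v pf M : a < b ->
  block_count (a + b * v) pf (S M) =
  (if (negb (Nat.eqb a 0) && negb (Nat.eqb a (b - 1) && pf))%bool then 1 else 0)
  + block_count v (Nat.eqb a (b - 1)) M.
Proof.
  intros Ha. unfold block_count. rewrite list_sum_map_seq_S. f_equal.
  - unfold block_start_from. rewrite digit_add_mul_0 by exact Ha. reflexivity.
  - f_equal. apply map_ext. intros k. unfold block_start_from.
    rewrite digit_add_mul_S by exact Ha. destruct k as [|k].
    + rewrite digit_add_mul_0 by exact Ha. reflexivity.
    + rewrite digit_add_mul_S by exact Ha. reflexivity.
Qed.

Lemma block_count_true v M :
  block_count v true (S M) + (if Nat.eqb (v mod b) (b - 1) then 1 else 0)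
  = block_count v false (S M).
Proof.
  unfold block_count. rewrite !list_sum_map_seq_S.
  change (fun k => if block_start_from v true (S k) then 1 else 0)
    with (fun k => if block_start_from v false (S k) then 1 else 0).
  unfold block_start_from at 1 3.
  rewrite digit_0_mod. destruct (Nat.eqb_spec (v mod b) (b - 1)) as [->|Hv].
  - destruct (Nat.eqb_spec (b - 1) 0); [lia|]. simpl. lia.
  - destruct (Nat.eqb (v mod b) 0); simpl; lia.
Qed.

(** Appending a low digit [a] to [v] adds a block if [a <> 0], except that it merges
    with the lowest block of [v] when both [a] and the last digit of [v] equal [b-1]. *)
Lemma lambda_add_mul a v : a < b ->
  lambda b (a + b * v) + (if (Nat.eqb a (b - 1) && Nat.eqb (v mod b) (b - 1))%bool then 1 else 0)
  = (if Nat.eqb a 0 then 0 else 1) + lambda b v.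
Proof.
  intros Ha. assert (Hv : v < b ^ S v) by (apply lt_pow_of_le; lia).
  rewrite (lambda_eq_block_count (a + b * v) (S (S v))) by (apply add_mul_lt_pow; assumption).
  rewrite (lambda_eq_block_count v (S v) Hv), block_count_add_mul by exact Ha.
  destruct (Nat.eqb_spec a (b - 1)) as [->|Hab].
  - destruct (Nat.eqb_spec (b - 1) 0); [lia|]. simpl. rewrite <- block_count_true. lia.
  - destruct (Nat.eqb_spec a 0); simpl; lia.
Qed.

End Digits.

(** * Sum of squares of the increments over a period *)

Section SecondMoment.

Local Open Scope Z_scope.

Variable b : nat.
Hypothesis Hb : (2 <= b)%nat.

Local Notation B := (Z.of_nat b).

Definition lambdaZ (u : nat) : Z := Z.of_nat (lambda b u).

Lemma lambdaZ_nonneg u : 0 <= lambdaZ u.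
Proof. unfold lambdaZ; lia. Qed.

Lemma lambdaZ_add_mul a v : (a < b)%nat ->
  lambdaZ (a + b * v) = (if Nat.eqb a 0 then 0 else 1) + lambdaZ v
    - (if (Nat.eqb a (b - 1) && Nat.eqb (v mod b) (b - 1))%bool then 1 else 0).
Proof.
  intros Ha. unfold lambdaZ. pose proof (lambda_add_mul b Hb a v Ha).
  destruct (Nat.eqb a 0), (Nat.eqb a (b - 1) && Nat.eqb (v mod b) (b - 1))%bool; lia.
Qed.

Lemma lambdaZ_pos u : (u mod b <> 0)%nat -> 1 <= lambdaZ u.
Proof.
  induction u as [u IH] using (well_founded_induction lt_wf). intros Hu.
  destruct (nat_digit_decomp b Hb u) as [a [v [Ha ->]]].
  rewrite mod_add_mul_small in Hu by lia. rewrite lambdaZ_add_mul by lia.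
  pose proof (lambdaZ_nonneg v).
  destruct (Nat.eqb_spec a 0) as [|_]; [lia|].
  destruct (Nat.eqb_spec a (b - 1)), (Nat.eqb_spec (v mod b) (b - 1)); cbn [andb]; try lia.
  enough (1 <= lambdaZ v) by lia. apply IH; lia.
Qed.

(** If [T] is the sum of squares over one period of length [P] for the shifts [u],
    this is the sum of squares over the period [b P], splitting on the lowest digit. *)
Definition sqsum_step (P : Z) (T : nat -> Z) (u : nat) : Z :=
  let a := Z.of_nat (u mod b) in
  (B - a) * (P * (a * a) + T (u / b)%nat) + a * (P * ((B - a) * (B - a)) + T (u / b + 1)%nat).

Lemma sqsum_step_add_mul P T a v : (a < b)%nat ->
  sqsum_step P T (a + b * v) =
  (B - Z.of_nat a) * (P * (Z.of_nat a * Z.of_nat a) + T v)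
  + Z.of_nat a * (P * ((B - Z.of_nat a) * (B - Z.of_nat a)) + T (v + 1)%nat).
Proof.
  intros Ha. unfold sqsum_step. rewrite mod_add_mul_small, div_add_mul_small by lia. reflexivity.
Qed.

Fixpoint period_sqsum (K : nat) : nat -> Z :=
  match K with
  | O => fun _ => 0
  | S K' => sqsum_step (Z.of_nat (b ^ K')) (period_sqsum K')
  end.

(** The bound [T u <= P b^2 lambda u] alone is not inductive: [sqsum_step] also involves
    [T (v + 1)], and when the last digit is [b - 1] a carry may merge two blocks. *)
Definition moment_bounds (T : nat -> Z) (P : Z) : Prop :=
  (forall u, T u <= P * B ^ 2 * lambdaZ u) /\
  (forall u, T (u + 1)%nat <= P * B ^ 2 * lambdaZ u + P * B) /\
  (forall u, (u mod b = b - 1)%nat -> T u + P * B ^ 2 <= P * B ^ 2 * lambdaZ u + 2 * P * B) /\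
  (forall u, (u mod b = b - 1)%nat -> T (u + 1)%nat + P * B ^ 2 <= P * B ^ 2 * lambdaZ u + P * B).

Section MomentBoundsStep.

Variables (T : nat -> Z) (P : Z).
Hypothesis HP : 0 < P.
Hypothesis HT : forall u, T u <= P * B ^ 2 * lambdaZ u.
Hypothesis HT1 : forall u, T (u + 1)%nat <= P * B ^ 2 * lambdaZ u + P * B.
Hypothesis HTc : forall u, (u mod b = b - 1)%nat ->
  T u + P * B ^ 2 <= P * B ^ 2 * lambdaZ u + 2 * P * B.
Hypothesis HT1c : forall u, (u mod b = b - 1)%nat ->
  T (u + 1)%nat + P * B ^ 2 <= P * B ^ 2 * lambdaZ u + P * B.

Lemma sqsum_step_carry_le u : (u mod b = b - 1)%nat ->
  sqsum_step P T u + B * P * B ^ 2 <= B * P * B ^ 2 * lambdaZ u + 2 * (B * P) * B.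
Proof.
  intros Hu. destruct (nat_digit_decomp b Hb u) as [a [v [Ha ->]]].
  rewrite mod_add_mul_small in Hu by lia. subst a.
  rewrite sqsum_step_add_mul, lambdaZ_add_mul by lia. rewrite Nat.eqb_refl.
  destruct (Nat.eqb_spec (b - 1) 0); [lia|].
  replace (Z.of_nat (b - 1)) with (B - 1) by lia.
  destruct (Nat.eqb_spec (v mod b) (b - 1)) as [Hv|Hv]; cbn [andb].
  - specialize (HTc v Hv). specialize (HT1c v Hv).
    assert ((B - 1) * T (v + 1)%nat <= (B - 1) * (P * B ^ 2 * lambdaZ v + P * B - P * B ^ 2))
      by (apply Z.mul_le_mono_nonneg_l; lia).
    nia.
  - specialize (HT v). specialize (HT1 v).
    assert ((B - 1) * T (v + 1)%nat <= (B - 1) * (P * B ^ 2 * lambdaZ v + P * B))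
      by (apply Z.mul_le_mono_nonneg_l; lia).
    nia.
Qed.

Lemma sqsum_step_le u : sqsum_step P T u <= B * P * B ^ 2 * lambdaZ u.
Proof.
  destruct (Nat.eq_dec (u mod b) (b - 1)) as [Hu|Hu].
  { pose proof (sqsum_step_carry_le u Hu). nia. }
  destruct (nat_digit_decomp b Hb u) as [a [v [Ha ->]]].
  rewrite mod_add_mul_small in Hu by lia.
  rewrite sqsum_step_add_mul, lambdaZ_add_mul by lia.
  destruct (Nat.eqb_spec a (b - 1)); [lia|]. cbn [andb].
  specialize (HT v). specialize (HT1 v). pose proof (lambdaZ_nonneg v).
  assert ((B - Z.of_nat a) * T v <= (B - Z.of_nat a) * (P * B ^ 2 * lambdaZ v))
    by (apply Z.mul_le_mono_nonneg_l; lia).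
  assert (Z.of_nat a * T (v + 1)%nat <= Z.of_nat a * (P * B ^ 2 * lambdaZ v + P * B))
    by (apply Z.mul_le_mono_nonneg_l; lia).
  destruct (Nat.eqb_spec a 0) as [->|].
  - simpl Z.of_nat in *. nia.
  - assert (Z.of_nat a * (B - Z.of_nat a + 1) <= B * B) by nia.
    nia.
Qed.

Lemma sqsum_step_succ_le u : sqsum_step P T (u + 1) <= B * P * B ^ 2 * lambdaZ u + B * P * B.
Proof.
  destruct (nat_digit_decomp b Hb u) as [a [v [Ha ->]]].
  rewrite lambdaZ_add_mul by lia. pose proof (lambdaZ_nonneg v). specialize (HT1 v).
  destruct (Nat.eqb_spec a (b - 1)) as [->|Hab].
  - replace (b - 1 + b * v + 1)%nat with (0 + b * (v + 1))%nat by lia.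
    rewrite sqsum_step_add_mul by lia.
    destruct (Nat.eqb_spec (b - 1) 0); [lia|]. simpl Z.of_nat.
    destruct (Nat.eqb (v mod b) (b - 1)); cbn [andb]; nia.
  - replace (a + b * v + 1)%nat with ((a + 1) + b * v)%nat by lia.
    rewrite sqsum_step_add_mul by lia. cbn [andb].
    specialize (HT v).
    assert ((B - Z.of_nat (a + 1)) * T v <= (B - Z.of_nat (a + 1)) * (P * B ^ 2 * lambdaZ v))
      by (apply Z.mul_le_mono_nonneg_l; lia).
    assert (Z.of_nat (a + 1) * T (v + 1)%nat <= Z.of_nat (a + 1) * (P * B ^ 2 * lambdaZ v + P * B))
      by (apply Z.mul_le_mono_nonneg_l; lia).
    destruct (Nat.eqb_spec a 0) as [->|].
    + simpl Z.of_nat in *. nia.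
    + assert (Z.of_nat (a + 1) * (B - Z.of_nat (a + 1) + 1) <= B * B) by nia.
      nia.
Qed.

Lemma sqsum_step_succ_carry_le u : (u mod b = b - 1)%nat ->
  sqsum_step P T (u + 1) + B * P * B ^ 2 <= B * P * B ^ 2 * lambdaZ u + B * P * B.
Proof.
  intros Hu. destruct (nat_digit_decomp b Hb u) as [a [v [Ha ->]]].
  rewrite mod_add_mul_small in Hu by lia. subst a.
  replace (b - 1 + b * v + 1)%nat with (0 + b * (v + 1))%nat by lia.
  rewrite sqsum_step_add_mul, lambdaZ_add_mul by lia. rewrite Nat.eqb_refl.
  destruct (Nat.eqb_spec (b - 1) 0); [lia|]. simpl Z.of_nat.
  destruct (Nat.eqb_spec (v mod b) (b - 1)) as [Hv|Hv]; cbn [andb].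
  - specialize (HT1c v Hv). nia.
  - specialize (HT1 v). nia.
Qed.

End MomentBoundsStep.

Lemma moment_bounds_step T P : 0 < P -> moment_bounds T P -> moment_bounds (sqsum_step P T) (B * P).
Proof.
  intros HP [HT [HT1 [HTc HT1c]]]. repeat split.
  - apply sqsum_step_le; assumption.
  - apply sqsum_step_succ_le; assumption.
  - apply sqsum_step_carry_le; assumption.
  - apply sqsum_step_succ_carry_le; assumption.
Qed.

Lemma moment_bounds_period_sqsum K : moment_bounds (period_sqsum K) (Z.of_nat (b ^ K)).
Proof.
  induction K as [|K IH].
  - rewrite Nat.pow_0_r. simpl period_sqsum.
    repeat split; intros u; pose proof (lambdaZ_nonneg u); try nia;
      intros Hu; assert (1 <= lambdaZ u) by (apply lambdaZ_pos; lia); nia.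
  - rewrite Nat.pow_succ_r', Nat2Z.inj_mul. apply moment_bounds_step; [|exact IH].
    pose proof (Nat.pow_nonzero b K ltac:(lia)). lia.
Qed.

Lemma period_sqsum_le K u : period_sqsum K u <= Z.of_nat (b ^ K) * B ^ 2 * lambdaZ u.
Proof. apply moment_bounds_period_sqsum. Qed.

End SecondMoment.

(** * Periodicity of [Delta] *)

(** [S] is a sum of [n] terms, made of between [q] and [q + 1] periods of length [P],
    each of which sums to between [G] and [G + D]. *)
Lemma ratio_sandwich_bound (S G D C q n P : R) :
  0 < n -> 0 < P -> 0 <= q -> 0 <= D -> 0 <= G <= P * C ->
  q * P <= n <= (q + 1) * P -> q * G <= S <= (q + 1) * (G + D) ->
  Rabs (S / n - G / P) <= D / P + (P * C + D) / n.
Proof.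
  intros Hn HP Hq HD [HG HGC] [Hn1 Hn2] [HS1 HS2].
  assert (Hlow : - (P * (P * C)) <= S * P - G * n).
  { assert (q * G * P <= S * P) by (apply Rmult_le_compat_r; lra).
    assert ((n - P) * G <= q * P * G) by (apply Rmult_le_compat_r; lra).
    assert (P * G <= P * (P * C)) by (apply Rmult_le_compat_l; lra).
    nra. }
  assert (Hup : S * P - G * n <= D * n + (P * C + D) * P).
  { assert (S * P <= (q + 1) * (G + D) * P) by (apply Rmult_le_compat_r; lra).
    assert (q * P * (G + D) <= n * (G + D)) by (apply Rmult_le_compat_r; lra).
    nra. }
  replace (S / n - G / P) with ((S * P - G * n) / (n * P)) by (field; lra).
  replace (D / P + (P * C + D) / n) with ((D * n + (P * C + D) * P) / (n * P)) by (field; lra).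
  apply Rabs_le. split; [|apply Rmult_le_compat_r; [left; apply Rinv_0_lt_compat; nra | exact Hup]].
  rewrite <- Rdiv_opp_l. apply Rmult_le_compat_r; [left; apply Rinv_0_lt_compat; nra|].
  assert (0 <= D * n) by nra. assert (0 <= D * P) by nra. lra.
Qed.

Section WrappedDelta.

Variable b : nat.
Hypothesis Hb : (2 <= b)%nat.

Definition wrap_delta (K r x : nat) : Z :=
  (Z.of_nat (digsum b ((x + r) mod b ^ K)) - Z.of_nat (digsum b x))%Z.

Lemma rsum_pow_S K h :
  rsum (b ^ S K) h = rsum b (fun a => rsum (b ^ K) (fun y => h (a + b * y)%nat)).
Proof.
  rewrite Nat.pow_succ_r', Nat.mul_comm, rsum_mul, rsum_swap.
  apply rsum_ext. intros a _. apply rsum_ext. intros y _. f_equal. lia.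
Qed.

Lemma wrap_delta_add_mul K r a y : (a < b)%nat ->
  wrap_delta (S K) r (a + b * y) =
  if Nat.ltb (a + r mod b) b then (Z.of_nat (r mod b) + wrap_delta K (r / b) y)%Z
  else (Z.of_nat (r mod b) - Z.of_nat b + wrap_delta K (r / b + 1) y)%Z.
Proof.
  intros Ha. unfold wrap_delta. rewrite Nat.pow_succ_r', digsum_add_mul by lia.
  pose proof (Nat.div_mod r b ltac:(lia)).
  assert (Hr : (r mod b < b)%nat) by (apply Nat.mod_upper_bound; lia).
  destruct (Nat.ltb_spec (a + r mod b) b).
  - replace (a + b * y + r)%nat with ((a + r mod b) + b * (y + r / b))%nat by lia.
    rewrite Nat.Div0.mod_mul_r, mod_add_mul_small, div_add_mul_small, digsum_add_mul by lia. lia.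
  - replace (a + b * y + r)%nat with ((a + r mod b - b) + b * (y + (r / b + 1)))%nat by lia.
    rewrite Nat.Div0.mod_mul_r, mod_add_mul_small, div_add_mul_small, digsum_add_mul by lia. lia.
Qed.

(** Among the [b] lowest digits [a], exactly [r mod b] of them produce a carry. *)
Lemma rsum_wrap_delta_S (F : Z -> R) K r :
  rsum (b ^ S K) (fun x => F (wrap_delta (S K) r x)) =
  INR (b - r mod b) * rsum (b ^ K) (fun y => F (Z.of_nat (r mod b) + wrap_delta K (r / b) y)%Z)
  + INR (r mod b)
    * rsum (b ^ K) (fun y => F (Z.of_nat (r mod b) - Z.of_nat b + wrap_delta K (r / b + 1) y)%Z).
Proof.
  assert (Hr : (r mod b < b)%nat) by (apply Nat.mod_upper_bound; lia).
  rewrite rsum_pow_S.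
  rewrite (rsum_ext _ _ (fun a => if Nat.ltb a (b - r mod b) then
      rsum (b ^ K) (fun y => F (Z.of_nat (r mod b) + wrap_delta K (r / b) y)%Z)
    else
      rsum (b ^ K) (fun y => F (Z.of_nat (r mod b) - Z.of_nat b + wrap_delta K (r / b + 1) y)%Z))).
  - rewrite rsum_ltb, Nat.min_r by lia.
    replace (b - (b - r mod b))%nat with (r mod b) by lia. reflexivity.
  - intros a Ha.
    destruct (Nat.ltb_spec a (b - r mod b)); apply rsum_ext; intros y _;
      rewrite wrap_delta_add_mul by exact Ha;
      destruct (Nat.ltb_spec (a + r mod b) b); try lia; reflexivity.
Qed.

Lemma rsum_wrap_delta K r : rsum (b ^ K) (fun x => IZR (wrap_delta K r x)) = 0.
Proof.
  revert r. induction K as [|K IH]; intros r.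
  - simpl. unfold wrap_delta. rewrite Nat.pow_0_r, Nat.mod_1_r, digsum_0 by lia. simpl. lra.
  - rewrite (rsum_wrap_delta_S IZR).
    rewrite (rsum_ext _ _ (fun y => INR (r mod b) + IZR (wrap_delta K (r / b) y)))
      by (intros; rewrite plus_IZR, <- INR_IZR_INZ; reflexivity).
    rewrite (rsum_ext _ (fun y => IZR (_ + wrap_delta K (r / b + 1) y))
               (fun y => (INR (r mod b) - INR b) + IZR (wrap_delta K (r / b + 1) y)))
      by (intros; rewrite plus_IZR, minus_IZR, <- !INR_IZR_INZ; reflexivity).
    rewrite !rsum_plus, !rsum_const, !IH, minus_INR
      by (apply Nat.lt_le_incl, Nat.mod_upper_bound; lia).
    ring.
Qed.

Lemma rsum_wrap_delta_sq K r :
  rsum (b ^ K) (fun x => IZR (wrap_delta K r x) ^ 2) = IZR (period_sqsum b K r).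
Proof.
  revert r. induction K as [|K IH]; intros r.
  - simpl. unfold wrap_delta. rewrite Nat.pow_0_r, Nat.mod_1_r, digsum_0 by lia. simpl. lra.
  - rewrite (rsum_wrap_delta_S (fun z => IZR z ^ 2)).
    set (c := INR (r mod b)). set (P := INR (b ^ K)).
    rewrite (rsum_ext _ _ (fun y =>
        c ^ 2 + 2 * c * IZR (wrap_delta K (r / b) y) + IZR (wrap_delta K (r / b) y) ^ 2))
      by (intros; rewrite plus_IZR, <- INR_IZR_INZ; fold c; ring).
    rewrite (rsum_ext _ (fun y => IZR (_ + wrap_delta K (r / b + 1) y) ^ 2)
               (fun y => (c - INR b) ^ 2 + 2 * (c - INR b) * IZR (wrap_delta K (r / b + 1) y)
                         + IZR (wrap_delta K (r / b + 1) y) ^ 2))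
      by (intros; rewrite plus_IZR, minus_IZR, <- !INR_IZR_INZ; fold c; ring).
    rewrite !rsum_plus, !rsum_const, !rsum_scal, !IH, !rsum_wrap_delta.
    unfold period_sqsum; fold period_sqsum. unfold sqsum_step.
    rewrite !plus_IZR, !mult_IZR, !plus_IZR, !mult_IZR, !minus_IZR, <- !INR_IZR_INZ.
    rewrite minus_INR by (apply Nat.lt_le_incl, Nat.mod_upper_bound; lia). fold c P. ring.
Qed.

End WrappedDelta.

Section Periodicity.

Variables b r : nat.
Hypothesis Hb : (2 <= b)%nat.

Lemma Delta_mul_pow_add K q x : (x < b ^ K - r)%nat ->
  Defs.Delta b r (q * b ^ K + x) = wrap_delta b K r x.
Proof.
  intros Hx. unfold Defs.Delta, wrap_delta. rewrite Nat.mod_small by lia.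
  replace (q * b ^ K + x + r)%nat with (q * b ^ K + (x + r))%nat by lia.
  rewrite !digsum_mul_pow_add by lia. lia.
Qed.

Definition delta_sum (phi : Z -> R) (N : nat) : R := rsum N (fun n => phi (Defs.Delta b r n)).

(** One period of [Delta] with the [r] positions affected by the wrap-around left out. *)
Definition window_sum (K : nat) (phi : Z -> R) : R :=
  rsum (b ^ K) (fun x => if Nat.ltb x (b ^ K - r) then phi (wrap_delta b K r x) else 0).

Section BoundedWeight.

Variables (phi : Z -> R) (C : R).
Hypothesis Hphi : forall e, 0 <= phi e <= C.

Lemma window_sum_bounds K : 0 <= window_sum K phi <= INR (b ^ K) * C.
Proof.
  unfold window_sum. rewrite <- rsum_const. split.
  - apply rsum_nonneg. intros x _. destruct (Nat.ltb _ _); [apply Hphi | lra].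
  - apply rsum_le. intros x _. pose proof (Hphi 0%Z).
    destruct (Nat.ltb _ _); [apply Hphi | lra].
Qed.

Lemma rsum_period_bounds K q : (r < b ^ K)%nat ->
  window_sum K phi <= rsum (b ^ K) (fun x => phi (Defs.Delta b r (q * b ^ K + x)))
  <= window_sum K phi + INR r * C.
Proof.
  intros HrK. split.
  - apply rsum_le. intros x _. destruct (Nat.ltb_spec x (b ^ K - r)).
    + rewrite Delta_mul_pow_add by exact H. lra.
    + apply Hphi.
  - replace (INR r * C) with (rsum (b ^ K) (fun x => if Nat.ltb x (b ^ K - r) then 0 else C))
      by (rewrite rsum_ltb, Nat.min_r by lia; replace (b ^ K - (b ^ K - r))%nat with r by lia; lra).
    unfold window_sum. rewrite <- rsum_plus. apply rsum_le. intros x _.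
    destruct (Nat.ltb_spec x (b ^ K - r)).
    + rewrite Delta_mul_pow_add by exact H. lra.
    + pose proof (Hphi (Defs.Delta b r (q * b ^ K + x))). lra.
Qed.

Lemma delta_sum_bounds K N : (r < b ^ K)%nat ->
  INR (N / b ^ K) * window_sum K phi <= delta_sum phi N
  <= (INR (N / b ^ K) + 1) * (window_sum K phi + INR r * C).
Proof.
  intros HrK. unfold delta_sum.
  assert (HB : (b ^ K <> 0)%nat) by (apply Nat.pow_nonzero; lia).
  pose proof (Nat.div_mod N (b ^ K) HB). pose proof (Nat.mod_upper_bound N (b ^ K) HB).
  assert (Hphi0 : forall i, 0 <= phi (Defs.Delta b r i)) by (intros; apply Hphi).
  split.
  - apply Rle_trans with (rsum (N / b ^ K * b ^ K) (fun n => phi (Defs.Delta b r n))).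
    + rewrite rsum_mul, <- rsum_const. apply rsum_le. intros q _.
      apply (rsum_period_bounds K q HrK).
    + apply rsum_le_length; [nia | exact Hphi0].
  - apply Rle_trans with (rsum ((N / b ^ K + 1) * b ^ K) (fun n => phi (Defs.Delta b r n))).
    + apply rsum_le_length; [nia | exact Hphi0].
    + rewrite rsum_mul, <- (Rmult_1_r (INR (N / b ^ K) + 1)).
      replace (INR (N / b ^ K) + 1) with (INR (N / b ^ K + 1)) by (rewrite plus_INR; simpl; lra).
      rewrite Rmult_1_r, <- rsum_const. apply rsum_le. intros q _.
      apply (rsum_period_bounds K q HrK).
Qed.

Lemma delta_avg_near K N : (r < b ^ K)%nat -> (1 <= N)%nat ->
  Rabs (delta_sum phi N / INR N - window_sum K phi / INR (b ^ K))
  <= INR r * C / INR (b ^ K) + (INR (b ^ K) * C + INR r * C) / INR N.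
Proof.
  intros HrK HN.
  assert (HB : (b ^ K <> 0)%nat) by (apply Nat.pow_nonzero; lia).
  pose proof (Nat.div_mod N (b ^ K) HB). pose proof (Nat.mod_upper_bound N (b ^ K) HB).
  apply ratio_sandwich_bound with (q := INR (N / b ^ K)).
  - apply lt_0_INR; lia.
  - apply lt_0_INR; lia.
  - apply pos_INR.
  - pose proof (pos_INR r). pose proof (Hphi 0%Z). nra.
  - apply window_sum_bounds.
  - split; rewrite <- ?S_INR, <- mult_INR; apply le_INR; nia.
  - apply delta_sum_bounds, HrK.
Qed.

End BoundedWeight.

End Periodicity.

(** * Densities *)

Lemma is_lim_seq_inv_INR : is_lim_seq (fun N => / INR N) 0.
Proof. exact (is_lim_seq_inv _ _ is_lim_seq_INR ltac:(discriminate)). Qed.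

Lemma is_lim_seq_inv_INR_pow (b : nat) : (2 <= b)%nat -> is_lim_seq (fun K => / INR (b ^ K)) 0.
Proof.
  intros Hb. apply (is_lim_seq_ext (fun K => / (INR b ^ K))).
  { intros K. rewrite pow_INR. reflexivity. }
  apply (is_lim_seq_inv _ p_infty); [|discriminate].
  apply is_lim_seq_geom_p. apply (lt_INR 1 b). lia.
Qed.

Lemma eventually_lt_of_lim_0 (u : nat -> R) (c eps : R) : is_lim_seq u 0 -> 0 < eps ->
  eventually (fun n => c * u n < eps).
Proof.
  intros Hu Heps.
  pose proof (is_lim_seq_scal_l u c 0 Hu) as Hcu. rewrite Rbar_mult_0_r in Hcu.
  apply is_lim_seq_spec in Hcu. destruct (Hcu (mkposreal eps Heps)) as [N HN].
  exists N. intros n Hn. specialize (HN n Hn). simpl in HN. apply Rabs_def2 in HN. lra.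
Qed.

Lemma ex_finite_lim_seq_approx (u : nat -> R) :
  (forall eps, 0 < eps -> exists c, eventually (fun N => Rabs (u N - c) <= eps)) ->
  ex_finite_lim_seq u.
Proof.
  intros H. apply ex_lim_seq_cauchy_corr. intros [eps Heps]. simpl.
  destruct (H (eps / 3)) as [c [N0 HN]]; [lra|].
  exists N0. intros n m Hn Hm.
  pose proof (proj1 (Rabs_le_between _ _) (HN n Hn)).
  pose proof (proj1 (Rabs_le_between _ _) (HN m Hm)).
  apply Rabs_lt_between. lra.
Qed.

Lemma sum_n_succ (a : nat -> R) n : sum_n a (S n) = sum_n a n + a (S n).
Proof. rewrite sum_Sn. reflexivity. Qed.

Lemma sum_n_Rmult_r (u : nat -> R) a n : sum_n u n * a = sum_n (fun k => u k * a) n.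
Proof.
  induction n as [|n IH]; [rewrite !sum_O; reflexivity|].
  rewrite !sum_n_succ, <- IH. ring.
Qed.

Lemma rsum_sum_n (F : nat -> nat -> R) M N :
  rsum M (fun i => sum_n (fun k => F k i) N) = sum_n (fun k => rsum M (F k)) N.
Proof.
  induction N as [|N IH].
  - rewrite sum_O. apply rsum_ext. intros. rewrite sum_O. reflexivity.
  - rewrite sum_n_succ, <- IH. rewrite <- rsum_plus. apply rsum_ext. intros.
    rewrite sum_n_succ. reflexivity.
Qed.

Lemma is_lim_seq_sum_n (u : nat -> nat -> R) (l : nat -> R) N :
  (forall k, is_lim_seq (u k) (l k)) ->
  is_lim_seq (fun M => sum_n (fun k => u k M) N) (sum_n l N).
Proof.
  intros Hu. induction N as [|N IH].
  - rewrite sum_O. apply (is_lim_seq_ext (u 0%nat)); [|apply Hu].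
    intros. rewrite sum_O. reflexivity.
  - rewrite sum_n_succ. apply (is_lim_seq_ext (fun M => sum_n (fun k => u k M) N + u (S N) M)).
    + intros. rewrite sum_n_succ. reflexivity.
    + apply is_lim_seq_plus'; [exact IH | apply Hu].
Qed.

Lemma is_lim_seq_sum_n_le (a : nat -> R) (V : R) :
  (forall k, 0 <= a k) -> (forall N, sum_n a N <= V) ->
  exists A : R, is_lim_seq (sum_n a) A /\ A <= V.
Proof.
  intros Ha HV. destruct (ex_finite_lim_seq_incr (sum_n a) V) as [A HA]; [|exact HV|].
  - intros n. rewrite sum_n_succ. specialize (Ha (S n)). lra.
  - exists A. split; [exact HA|].
    exact (is_lim_seq_le _ _ A V HV HA (is_lim_seq_const V)).
Qed.

Definition zind (d e : Z) : R := if Z.eqb e d then 1 else 0.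

(** The window [[-N-1, N]] is exactly the set of [zpos k] and [zneg k] with [k <= N]. *)
Definition window (w : Z -> R) (N : nat) (e : Z) : R :=
  if (Z.leb (- Z.of_nat N - 1) e && Z.leb e (Z.of_nat N))%bool then w e else 0.

Lemma window_sum_n (w : Z -> R) N e :
  window w N e = sum_n (fun k => w (zpos k) * zind (zpos k) e + w (zneg k) * zind (zneg k) e) N.
Proof.
  unfold window. induction N as [|N IH].
  - rewrite sum_O. unfold zind, zpos, zneg.
    destruct (Z.eqb_spec e (Z.of_nat 0)), (Z.eqb_spec e (- Z.of_nat 1)),
      (Z.leb_spec (- Z.of_nat 0 - 1) e), (Z.leb_spec e (Z.of_nat 0)); simpl in *;
      subst; try lia; ring.
  - rewrite sum_n_succ, <- IH. unfold zind, zpos, zneg.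
    destruct (Z.eqb_spec e (Z.of_nat (S N))), (Z.eqb_spec e (- Z.of_nat (S (S N)))),
      (Z.leb_spec (- Z.of_nat N - 1) e), (Z.leb_spec e (Z.of_nat N)),
      (Z.leb_spec (- Z.of_nat (S N) - 1) e), (Z.leb_spec e (Z.of_nat (S N))); simpl in *;
      subst; try lia; ring.
Qed.

Section Density.

Variables b r : nat.
Hypothesis Hb : (2 <= b)%nat.

Lemma count_Delta_delta_sum d N : INR (count_Delta b r d N) = delta_sum b r (zind d) N.
Proof.
  unfold count_Delta, delta_sum. induction N as [|N IH]; [reflexivity|].
  rewrite seq_S, filter_app, length_app, plus_INR, IH. simpl.
  unfold zind. destruct (Z.eqb (Defs.Delta b r N) d); simpl; lra.
Qed.

Section BoundedWeight.

Variables (phi : Z -> R) (C : R).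
Hypothesis Hphi : forall e, 0 <= phi e <= C.

Lemma delta_avg_ex_lim : ex_finite_lim_seq (fun N => delta_sum b r phi N / INR N).
Proof.
  apply ex_finite_lim_seq_approx. intros eps Heps.
  destruct (eventually_lt_of_lim_0 _ (INR r * C) (eps / 2) (is_lim_seq_inv_INR_pow b Hb))
    as [K0 HK0]; [lra|].
  set (K := (K0 + r)%nat).
  assert (HrK : (r < b ^ K)%nat) by (apply lt_pow_of_le; lia).
  destruct (eventually_lt_of_lim_0 _ (INR (b ^ K) * C + INR r * C) (eps / 2) is_lim_seq_inv_INR)
    as [N0 HN0]; [lra|].
  exists (window_sum b r K phi / INR (b ^ K)), (N0 + 1)%nat. intros N HN.
  eapply Rle_trans; [apply (delta_avg_near b r Hb phi C Hphi K N HrK); lia|].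
  specialize (HK0 K ltac:(lia)). specialize (HN0 N ltac:(lia)). unfold Rdiv. lra.
Qed.

Lemma delta_avg_lim_le K (l : R) : (r < b ^ K)%nat ->
  is_lim_seq (fun N => delta_sum b r phi N / INR N) l ->
  l <= window_sum b r K phi / INR (b ^ K) + INR r * C / INR (b ^ K).
Proof.
  intros HrK Hl. set (x := window_sum b r K phi / INR (b ^ K) + INR r * C / INR (b ^ K)).
  assert (Hx : is_lim_seq (fun N => x + (INR (b ^ K) * C + INR r * C) * / INR N)
                 (x + (INR (b ^ K) * C + INR r * C) * 0)).
  { apply is_lim_seq_plus'; [apply is_lim_seq_const|].
    apply (is_lim_seq_scal_l _ _ 0), is_lim_seq_inv_INR. }
  rewrite Rmult_0_r, Rplus_0_r in Hx.
  enough (H : Rbar_le l x) by exact H.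
  refine (is_lim_seq_le_loc _ _ _ _ _ Hl Hx).
  exists 1%nat. intros N HN.
  pose proof (proj1 (Rabs_le_between _ _) (delta_avg_near b r Hb phi C Hphi K N HrK HN)).
  unfold x, Rdiv in *. lra.
Qed.

End BoundedWeight.

Lemma mu_is_lim d : is_lim_seq (fun N => INR (count_Delta b r d N) / INR N) (mu b r d).
Proof.
  assert (Hind : forall e, 0 <= zind d e <= 1) by (intros; unfold zind; destruct (Z.eqb e d); lra).
  destruct (delta_avg_ex_lim (zind d) 1 Hind) as [l Hl].
  apply (is_lim_seq_ext _ (fun N => INR (count_Delta b r d N) / INR N)) in Hl;
    [|intros; rewrite count_Delta_delta_sum; reflexivity].
  unfold mu. rewrite (is_lim_seq_unique _ _ Hl). exact Hl.
Qed.

Lemma mu_nonneg d : 0 <= mu b r d.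
Proof.
  assert (Hp : forall N, 0 <= INR (count_Delta b r d N) / INR N).
  { intros [|N]; [simpl; unfold Rdiv; rewrite Rinv_0, Rmult_0_r; lra|].
    apply Rdiv_le_0_compat; [apply pos_INR | apply lt_0_INR; lia]. }
  exact (is_lim_seq_le (fun _ => 0) _ 0 (mu b r d) Hp (is_lim_seq_const 0) (mu_is_lim d)).
Qed.

Lemma delta_avg_window_lim (w : Z -> R) N :
  is_lim_seq (fun M => delta_sum b r (window w N) M / INR M)
    (sum_n (fun k => w (zpos k) * mu b r (zpos k) + w (zneg k) * mu b r (zneg k)) N).
Proof.
  apply (is_lim_seq_ext (fun M => sum_n (fun k =>
      w (zpos k) * (INR (count_Delta b r (zpos k) M) / INR M)
      + w (zneg k) * (INR (count_Delta b r (zneg k) M) / INR M)) N)).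
  - intros M. unfold delta_sum.
    rewrite (rsum_ext _ _ (fun i => sum_n (fun k => w (zpos k) * zind (zpos k) (Defs.Delta b r i)
        + w (zneg k) * zind (zneg k) (Defs.Delta b r i)) N)) by (intros; apply window_sum_n).
    rewrite rsum_sum_n. unfold Rdiv. rewrite sum_n_Rmult_r. apply sum_n_ext. intros k.
    rewrite !count_Delta_delta_sum. unfold delta_sum. rewrite rsum_plus, !rsum_scal.
    change (AbelianMonoid.sort R_AbelianMonoid) with R. ring.
  - apply is_lim_seq_sum_n. intros k.
    apply is_lim_seq_plus'; apply (is_lim_seq_scal_l _ _ (Finite _)), mu_is_lim.
Qed.

End Density.

(** * Moments of [mu] *)

Lemma window_sq_bounds N e :
  0 <= window (fun d => IZR d ^ 2) N e <= IZR e ^ 2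
  /\ window (fun d => IZR d ^ 2) N e <= (INR N + 1) ^ 2.
Proof.
  unfold window. pose proof (pos_INR N).
  destruct (Z.leb_spec (- Z.of_nat N - 1) e) as [H1|], (Z.leb_spec e (Z.of_nat N)) as [H2|]; simpl;
    try (split; [split|]; nra).
  apply IZR_le in H1. apply IZR_le in H2.
  rewrite minus_IZR, opp_IZR, <- INR_IZR_INZ in H1. rewrite <- INR_IZR_INZ in H2.
  split; [split|]; nra.
Qed.

Section MomentBounds.

Variables b r : nat.
Hypothesis Hb : (2 <= b)%nat.

Lemma window_sum_le_sqsum phi K : (forall e, 0 <= phi e <= IZR e ^ 2) ->
  window_sum b r K phi <= INR (b ^ K) * (INR b ^ 2 * INR (lambda b r)).
Proof.
  intros Hphi. apply Rle_trans with (rsum (b ^ K) (fun x => IZR (wrap_delta b K r x) ^ 2)).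
  - apply rsum_le. intros x _. destruct (Nat.ltb _ _); [apply Hphi | nra].
  - rewrite rsum_wrap_delta_sq by exact Hb.
    pose proof (period_sqsum_le b Hb K r) as HT. apply IZR_le in HT.
    unfold lambdaZ in HT. replace (Z.of_nat b ^ 2)%Z with (Z.of_nat b * Z.of_nat b)%Z in HT by ring.
    rewrite !mult_IZR, <- !INR_IZR_INZ in HT. lra.
Qed.

Lemma le_of_le_add_div_pow (l x c : R) :
  (forall K, (r <= K)%nat -> l <= x + c / INR (b ^ K)) -> l <= x.
Proof.
  intros H.
  assert (Hx : is_lim_seq (fun K => x + c * / INR (b ^ K)) (x + c * 0)).
  { apply is_lim_seq_plus'; [apply is_lim_seq_const|].
    apply (is_lim_seq_scal_l _ _ 0), is_lim_seq_inv_INR_pow, Hb. }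
  rewrite Rmult_0_r, Rplus_0_r in Hx.
  enough (Hle : Rbar_le l x) by exact Hle.
  refine (is_lim_seq_le_loc _ _ _ _ _ (is_lim_seq_const l) Hx).
  exists r. intros K HK. apply H, HK.
Qed.

Lemma mu_moment2_partial_le N :
  sum_n (fun k => IZR (zpos k) ^ 2 * mu b r (zpos k) + IZR (zneg k) ^ 2 * mu b r (zneg k)) N
  <= INR b ^ 2 * INR (lambda b r).
Proof.
  set (phi := window (fun d => IZR d ^ 2) N).
  assert (Hphi : forall e, 0 <= phi e <= (INR N + 1) ^ 2)
    by (intros e; destruct (window_sq_bounds N e) as [[? ?] ?]; split; assumption).
  apply le_of_le_add_div_pow with (c := INR r * (INR N + 1) ^ 2). intros K HK.
  assert (HrK : (r < b ^ K)%nat) by (apply lt_pow_of_le; lia).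
  assert (HB : 0 < INR (b ^ K)) by (apply lt_0_INR; lia).
  eapply Rle_trans;
    [apply (delta_avg_lim_le b r Hb phi _ Hphi K _ HrK (delta_avg_window_lim b r Hb _ N))|].
  assert (HG : window_sum b r K phi / INR (b ^ K) <= INR b ^ 2 * INR (lambda b r)).
  { apply Rmult_le_reg_r with (INR (b ^ K)); [exact HB|].
    unfold Rdiv. rewrite Rmult_assoc, Rinv_l by lra. rewrite Rmult_1_r, Rmult_comm.
    apply window_sum_le_sqsum. intros e. apply window_sq_bounds. }
  lra.
Qed.

Lemma mu_mass_partial_le N : sum_n (fun k => mu b r (zpos k) + mu b r (zneg k)) N <= 1.
Proof.
  set (phi := window (fun _ => 1) N).
  assert (Hphi : forall e, phi e <= 1) by (intros; unfold phi, window; destruct (_ && _)%bool; lra).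
  pose proof (delta_avg_window_lim b r Hb (fun _ => 1) N) as Hl.
  rewrite (sum_n_ext _ (fun k => mu b r (zpos k) + mu b r (zneg k))) in Hl by (intros; simpl; ring).
  enough (Hle : Rbar_le (sum_n (fun k => mu b r (zpos k) + mu b r (zneg k)) N) 1) by exact Hle.
  refine (is_lim_seq_le_loc _ _ _ _ _ Hl (is_lim_seq_const 1)).
  exists 1%nat. intros M HM. assert (HMpos : 0 < INR M) by (apply lt_0_INR; lia).
  apply Rmult_le_reg_r with (INR M); [exact HMpos|].
  unfold Rdiv. rewrite Rmult_assoc, Rinv_l, Rmult_1_r, Rmult_1_l by lra.
  rewrite <- (Rmult_1_r (INR M)), <- rsum_const. apply rsum_le. intros. apply Hphi.
Qed.

End MomentBounds.

Lemma Rabs_IZR_le_sq (z : Z) : Rabs (IZR z) <= IZR z ^ 2.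
Proof.
  destruct (Z.eq_dec z 0) as [->|Hz]; [simpl; rewrite Rabs_R0; lra|].
  assert (1 <= Rabs (IZR z)) by (rewrite <- abs_IZR; apply IZR_le; lia).
  rewrite <- pow2_abs. nra.
Qed.

(** [Var <= E[X^2]] for a sub-probability weight [p] on [Z], with sums over [Z] taken
    along the enumeration [0, -1, 1, -2, ...] used in [mu_var]. *)
Lemma zseries_variance_le (p : Z -> R) (m V : R) :
  (forall d, 0 <= p d) ->
  (forall N, sum_n (fun k => p (zpos k) + p (zneg k)) N <= 1) ->
  (forall N,
     sum_n (fun k => IZR (zpos k) ^ 2 * p (zpos k) + IZR (zneg k) ^ 2 * p (zneg k)) N <= V) ->
  m = Series (fun k => IZR (zpos k) * p (zpos k) + IZR (zneg k) * p (zneg k)) ->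
  Series (fun k => (IZR (zpos k) - m) ^ 2 * p (zpos k) + (IZR (zneg k) - m) ^ 2 * p (zneg k)) <= V.
Proof.
  intros Hp Hmass Hmom Hm.
  set (t := fun k => IZR (zpos k) ^ 2 * p (zpos k) + IZR (zneg k) ^ 2 * p (zneg k)) in *.
  set (g := fun k => IZR (zpos k) * p (zpos k) + IZR (zneg k) * p (zneg k)) in *.
  set (c := fun k => p (zpos k) + p (zneg k)) in *.
  assert (Hpk : forall k, 0 <= p (zpos k) /\ 0 <= p (zneg k)) by (intros; split; apply Hp).
  destruct (is_lim_seq_sum_n_le t V) as [A [HA HAV]];
    [intros k; destruct (Hpk k); unfold t; nra | exact Hmom |].
  destruct (is_lim_seq_sum_n_le c 1) as [M0 [Hc Hc1]];
    [intros k; destruct (Hpk k); unfold c; lra | exact Hmass |].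
  assert (Hg : is_lim_seq (sum_n g) m).
  { rewrite Hm. apply Series_correct.
    apply (@ex_series_le R_AbsRing R_CompleteNormedModule g t); [|exists A; exact HA].
    intros k. change (norm (g k)) with (Rabs (g k)). unfold g, t. destruct (Hpk k).
    pose proof (Rabs_IZR_le_sq (zpos k)). pose proof (Rabs_IZR_le_sq (zneg k)).
    eapply Rle_trans; [apply Rabs_triang|].
    rewrite !Rabs_mult, !(Rabs_right (p _)) by lra. nra. }
  assert (Hvar : is_lim_seq
      (sum_n (fun k => (IZR (zpos k) - m) ^ 2 * p (zpos k) + (IZR (zneg k) - m) ^ 2 * p (zneg k)))
      (A - 2 * m * m + m ^ 2 * M0)).
  { apply (is_lim_seq_ext (fun N => sum_n t N - 2 * m * sum_n g N + m ^ 2 * sum_n c N)).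
    - intros N. induction N as [|N IH]; [rewrite !sum_O; unfold t, g, c; ring|].
      rewrite !sum_n_succ, <- IH. unfold t, g, c. ring.
    - apply is_lim_seq_plus'; [apply is_lim_seq_minus'; [exact HA|]|];
        apply (is_lim_seq_scal_l _ _ (Finite _)); assumption. }
  unfold Series. rewrite (is_lim_seq_unique _ _ Hvar). simpl. nra.
Qed.

Theorem mainTheorem15 (b r : nat) (Hb : (2 <= b)%nat) (Hr : (1 <= r)%nat) :
  mu_var b r <= INR b ^ 2 * INR (lambda b r).
Proof.
  apply (zseries_variance_le (mu b r) (mu_mean b r)).
  - apply mu_nonneg, Hb.
  - apply mu_mass_partial_le, Hb.
  - apply mu_moment2_partial_le, Hb.
  - reflexivity.
Qed.
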